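(* Let $d,j$ be integers with $0<j<d$. Let $\lambda_1,\dots,\lambda_t$ be the elements of $\mathscr{P}_{3,d-1}(j)$ and $\mu_1,\dots,\mu_s$ the elements of $\mathscr{P}_{3,d-1}(j-1)$, and define the $s\times t$ matrix $C=(C_{pq})$ by $E([x^{\lambda_q}])=\sum_{p=1}^{s} C_{pq}[x^{\mu_p}]$. Then $\operatorname{rank} C = s = p_{3,d-1}(j-1)$.
   Context: $\Bbbk$ is an algebraically closed field of characteristic $0$. For an integer $d\ge 1$, $A(d)=\Bbbk[x_1,x_2,x_3]/(x_1^d,x_2^d,x_3^d)=\bigoplus_j A(d)_j$ with its standard grading; the monomials $x_1^{a_1}x_2^{a_2}x_3^{a_3}$ with $0\le a_i\le d-1$ form a basis. The linear map $E:A(d)_{j+1}\to A(d)_j$ is defined on monomials by $E(x_1^{a_1}x_2^{a_2}x_3^{a_3})=\sum_{k=1}^{3} a_k(d-a_k)\,x_1^{a_1}\cdots x_k^{a_k-1}\cdots x_3^{a_3}$ (terms with $a_k=0$ vanish). For integers $l\ge 0$ and $n$, $\mathscr{P}_{3,l}(n)$ is the set of integer triples $(a,b,c)$ with $l\ge a\ge b\ge c\ge 0$, $a+b+c=n$, and $p_{3,l}(n)=|\mathscr{P}_{3,l}(n)|$ (so $p_{3,l}(n)=0$ for $n<0$). For $\lambda=(a,b,c)$, $[x^\lambda]$ denotes the sum of the distinct monomials in the orbit of $x_1^ax_2^bx_3^c$ under the action of $S_3$ permuting the variables. *)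

From HB Require Import structures.
From mathcomp Require Import all_boot all_order all_algebra.
Unset Printing Implicit Defensive.
Import Order.TTheory GRing.Theory Num.Theory.
Local Open Scope ring_scope.

(* Exponent vectors of the monomial basis of A(d) = k[x1,x2,x3]/(x1^d,x2^d,x3^d):
   a : 'I_3 -> 'I_d  represents x1^(a 0) x2^(a 1) x3^(a 2). *)
Definition Mono (d : nat) := {ffun 'I_3 -> 'I_d}.

(* An element of A(d) is given by its coefficient function on the monomial basis. *)
Definition Alg (F : fieldType) (d : nat) := Mono d -> F.

(* The linear map E, defined on basis monomials by
   E(x^a) = sum_k a_k (d - a_k) x^(a - e_k)  (terms with a_k = 0 vanish),
   extended linearly: coefficient of x^m in E(f). *)
Definition E (F : fieldType) (d : nat) (f : Alg F d) : Alg F d :=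
  fun m => \sum_(a : Mono d) f a *
    \sum_(k < 3) (if [forall i, (a i : nat) == (m i + (i == k))%N]
                  then ((a k) * (d - a k))%:R else 0).

(* [x^lam]: the sum of the distinct monomials in the S_3-orbit of x1^a x2^b x3^c,
   i.e. the indicator of the exponent vectors that are rearrangements of (a,b,c). *)
Definition orbsum (F : fieldType) (d : nat) (lam : nat * nat * nat) : Alg F d :=
  fun m => if perm_eq [:: (m ord0 : nat); (m (inord 1) : nat); (m (inord 2) : nat)]
                      [:: lam.1.1; lam.1.2; lam.2]
           then 1 else 0.

Definition P3 (l n : nat) : seq (nat * nat * nat) :=
  [seq x <- [seq (ab, c) | ab <- [seq (a, b) | a <- iota 0 l.+1, b <- iota 0 l.+1],
                           c <- iota 0 l.+1]
   | [&& (x.1.1 <= l)%N, (x.1.2 <= x.1.1)%N, (x.2 <= x.1.2)%N & (x.1.1 + x.1.2 + x.2 == n)%N]].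

Definition p3 (l n : nat) : nat := size (P3 l n).

Definition isCmatrix (F : fieldType) (d j : nat)
  (C : 'M[F]_(size (P3 d.-1 j.-1), size (P3 d.-1 j))) : Prop :=
  forall (q : 'I_(size (P3 d.-1 j))) (m : Mono d),
    @E F d (orbsum F d (nth (0, 0, 0)%N (P3 d.-1 j) q)) m =
    \sum_(p < size (P3 d.-1 j.-1)) C p q * orbsum F d (nth (0, 0, 0)%N (P3 d.-1 j.-1) p) m.

From HB Require Import structures.
From mathcomp Require Import all_boot all_order all_algebra.
From mathcomp Require Import zify.
Import GRing.Theory.
Local Open Scope ring_scope.

(* Since E commutes with permutations of the variables, E([x^lam]) is a symmetric
   element of degree j-1, hence a combination of the [x^mu]; the coefficients are
   forced, being the coefficients of the monomials x^mu themselves.  For the rank,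
   send the row mu = (a,b,c) to the column lam = (a+1,b,c): the entry there is an
   integer at least (a+1)(d-a-1) > 0, nonzero in characteristic 0, and any other row
   mu' = (a',b',c') with a nonzero entry in that column has a' > a, since x^(mu') is
   obtained from a rearrangement of lam by lowering one exponent.  Hence C is
   triangular for the order of rows by decreasing first part, and its rows are
   independent. *)

Definition seq3 (t : nat * nat * nat) : seq nat := [:: t.1.1; t.1.2; t.2].

Lemma perm_eq2 (T : eqType) (x0 x1 y0 y1 : T) : perm_eq [:: x0; x1] [:: y0; y1] ->
  (x0 = y0 /\ x1 = y1) \/ (x0 = y1 /\ x1 = y0).
Proof.
have perm1 x y : perm_eq [:: x] [:: y] -> x = y.
  by move/perm_mem/(_ x); rewrite !inE eqxx => /esym/eqP.
move=> e; have := perm_mem e x0; rewrite !inE eqxx => /esym/orP[]/eqP ex0; subst x0.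
  by left; split; last by apply: perm1; rewrite -(perm_cons y0).
right; split => //; apply: perm1; rewrite -(perm_cons y1).
by apply: (perm_trans e); rewrite (perm_catCA [:: y0] [:: y1] [::]).
Qed.

Lemma perm_eq3 (T : eqType) (x0 x1 x2 y0 y1 y2 : T) :
  perm_eq [:: x0; x1; x2] [:: y0; y1; y2] ->
  (x0 = y0 /\ x1 = y1 /\ x2 = y2) \/ (x0 = y0 /\ x1 = y2 /\ x2 = y1) \/
  (x0 = y1 /\ x1 = y0 /\ x2 = y2) \/ (x0 = y1 /\ x1 = y2 /\ x2 = y0) \/
  (x0 = y2 /\ x1 = y0 /\ x2 = y1) \/ (x0 = y2 /\ x1 = y1 /\ x2 = y0).
Proof.
move=> e; have := perm_mem e x0; rewrite !inE eqxx => /esym/or3P[]/eqP ex0; subst x0.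
- by rewrite perm_cons in e; case/perm_eq2: e => -[-> ->]; tauto.
- have {}e : perm_eq [:: y1, x1 & [:: x2]] [:: y1, y0 & [:: y2]].
    by apply: (perm_trans e); rewrite (perm_catCA [:: y0] [:: y1] [:: y2]).
  by rewrite perm_cons in e; case/perm_eq2: e => -[-> ->]; tauto.
- have {}e : perm_eq [:: y2, x1 & [:: x2]] [:: y2, y0 & [:: y1]].
    by apply: (perm_trans e); rewrite perm_sym -(perm_rcons y2 [:: y0; y1]).
  by rewrite perm_cons in e; case/perm_eq2: e => -[-> ->]; tauto.
Qed.

Local Notation part l n p := (nth (0, 0, 0)%N (P3 l n) p).

Lemma mem_P3 l n x : (x \in P3 l n) =
  [&& (x.1.1 <= l)%N, (x.1.2 <= x.1.1)%N, (x.2 <= x.1.2)%N & (x.1.1 + x.1.2 + x.2 == n)%N].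
Proof.
rewrite /P3 mem_filter; apply/andP/idP => [[]//|x_ok]; split => //.
case: x x_ok => [[a b] c] /and4P[la ba cb _]; rewrite /= in la ba cb.
apply: (allpairs_f (fun ab c => (ab, c))); last by rewrite mem_iota; lia.
by apply: (allpairs_f (fun a b => (a, b))); rewrite mem_iota; lia.
Qed.

Lemma uniq_P3 l n : uniq (P3 l n).
Proof.
rewrite /P3 filter_uniq //; apply: allpairs_uniq; rewrite ?iota_uniq //.
  by apply: allpairs_uniq; rewrite ?iota_uniq // => -[? ?] [? ?] _ _ [-> ->].
by move=> -[? ?] [? ?] _ _ [-> ->].
Qed.

Lemma mem_part {l n} (p : 'I_(size (P3 l n))) : part l n p \in P3 l n.
Proof. exact: mem_nth. Qed.

Lemma part_inj {l n} (p p' : 'I_(size (P3 l n))) : part l n p = part l n p' -> p = p'.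
Proof.
move=> e; apply/val_inj/eqP.
by rewrite -(nth_uniq (0, 0, 0)%N (ltn_ord p) (ltn_ord p') (uniq_P3 l n)) e.
Qed.

Lemma P3_partP l n mu : mu \in P3 l n -> exists p : 'I_(size (P3 l n)), part l n p = mu.
Proof.
move=> mu_in; have ltp : (index mu (P3 l n) < size (P3 l n))%N by rewrite index_mem.
by exists (Ordinal ltp); rewrite nth_index.
Qed.

Lemma P3_perm_inj {l n mu mu'} : mu \in P3 l n -> mu' \in P3 l n ->
  perm_eq (seq3 mu) (seq3 mu') -> mu = mu'.
Proof.
case: mu mu' => [[a b] c] [[a' b'] c']; rewrite !mem_P3 /=.
move=> /and4P[_ ba cb _] /and4P[_ ba' cb' _] /perm_eq3 /= e.
by have [-> [-> ->]] : a = a' /\ b = b' /\ c = c' by lia.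
Qed.

Lemma P3_part_perm {l n x0 x1 x2} : (x0 <= l)%N -> (x1 <= l)%N -> (x2 <= l)%N ->
  (x0 + x1 + x2)%N = n ->
  exists p : 'I_(size (P3 l n)), perm_eq [:: x0; x1; x2] (seq3 (part l n p)).
Proof.
move=> x0l x1l x2l sum_n; set s := [:: x0; x1; x2].
have := sort_sorted (fun x y => leq_total y x) s.
have := size_sort geq s; have := permEl (perm_sort geq s).
case: (sort geq s) => [|a [|b [|c []]]] // s_abc _ /= /and3P[ba cb _].
have /P3_partP[p e] : (a, b, c) \in P3 l n.
  by rewrite mem_P3; move/perm_eq3: s_abc => /=; lia.
by exists p; rewrite e perm_sym.
Qed.

Definition exps {d} (m : Mono d) : seq nat :=
  [:: (m ord0 : nat); (m (inord 1) : nat); (m (inord 2) : nat)].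

Definition mono_of n (mu : nat * nat * nat) : Mono n.+1 :=
  [ffun i : 'I_3 => inord (nth 0%N (seq3 mu) i)].

Lemma exps_mono_of {n k mu} : mu \in P3 n k -> exps (mono_of n mu) = seq3 mu.
Proof.
case: mu => [[a b] c]; rewrite mem_P3 /= => /and4P[an ba cb _].
by rewrite /exps !ffunE /= !inordK //=; lia.
Qed.

Lemma orbsum_part {F : fieldType} {d l n} {m : Mono d} {p p' : 'I_(size (P3 l n))} :
  perm_eq (exps m) (seq3 (part l n p)) -> orbsum F d (part l n p') m = (p' == p)%:R.
Proof.
move=> mp; rewrite /orbsum -/(exps m) (permPl mp).
have [->|ne] := eqVneq p' p; first by rewrite perm_refl.
case: ifP => // /(P3_perm_inj (mem_part p) (mem_part p')) /esym/part_inj e.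
by rewrite e eqxx in ne.
Qed.

Lemma sum_orbsum_part {F : fieldType} {d l n} {m : Mono d} {p : 'I_(size (P3 l n))}
  {c : 'I_(size (P3 l n)) -> F} :
  perm_eq (exps m) (seq3 (part l n p)) ->
  \sum_p' c p' * orbsum F d (part l n p') m = c p.
Proof.
move=> mp; under eq_bigr do rewrite (orbsum_part mp) mulr_natr mulrb.
by rewrite -big_mkcond big_pred1_eq.
Qed.

Lemma orbsum_expansion (F : fieldType) n k (f : Alg F n.+1) :
  (forall m m', perm_eq (exps m) (exps m') -> f m = f m') ->
  (forall m, f m != 0 -> sumn (exps m) = k) ->
  forall m, f m = \sum_(p < size (P3 n k))
                   f (mono_of n (part n k p)) * orbsum F n.+1 (part n k p) m.
Proof.
move=> f_sym f_deg m.
have [/existsP[p mp] | /existsPn none] :=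
  boolP [exists p : 'I_(size (P3 n k)), perm_eq (exps m) (seq3 (part n k p))].
  by rewrite (sum_orbsum_part mp); apply: f_sym; rewrite (exps_mono_of (mem_part p)).
rewrite big1 => [|p _]; last by rewrite /orbsum -/(exps m) (negbTE (none p)) mulr0.
have [//|/f_deg /= deg_m] := eqVneq (f m) 0.
have sum_m : (m ord0 + m (inord 1) + m (inord 2))%N = k by lia.
have m_le i : (m i <= n)%N by rewrite -ltnS.
have [p mp] := P3_part_perm (m_le _) (m_le _) (m_le _) sum_m.
by have := none p; rewrite mp.
Qed.

Definition mono_incr {n} (m : Mono n.+1) (k : 'I_3) : Mono n.+1 :=
  [ffun i => inord (m i + (i == k))].

Lemma mono_incrE n (m : Mono n.+1) k i : (m k < n)%N ->
  (mono_incr m k i : nat) = (m i + (i == k))%N.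
Proof.
move=> mk_lt; rewrite ffunE inordK //.
by case: eqP => [->|_]; [rewrite addn1 | rewrite addn0 ltn_ord].
Qed.

Lemma sum_mono_incr (F : fieldType) n (m : Mono n.+1) k (f g : Mono n.+1 -> F) :
  \sum_(a : Mono n.+1) f a * (if [forall i, (a i : nat) == (m i + (i == k))%N] then g a else 0)
  = if (m k < n)%N then f (mono_incr m k) * g (mono_incr m k) else 0.
Proof.
case: ifP => [mk_lt | mk_ge]; last first.
  rewrite big1 // => a _; case: ifP => [/forallP/(_ k)/eqP|]; last by rewrite mulr0.
  by rewrite eqxx addn1 => ak; move: (ltn_ord (a k)); rewrite ak ltnS mk_ge.
have incr_eq : [forall i, (mono_incr m k i : nat) == (m i + (i == k))%N].
  by apply/forallP => i; rewrite mono_incrE.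
rewrite (bigD1 (mono_incr m k)) //= incr_eq big1 ?addr0 // => a ne_a.
case: ifP => [/forallP a_eq|]; last by rewrite mulr0.
case/eqP: ne_a; apply/ffunP => i; apply/val_inj.
by rewrite /= mono_incrE // (eqP (a_eq i)).
Qed.

(* The coefficient of x^m in E([x^lam]): the k-th summand comes from the monomial
   x^(m + e_k), which occurs in [x^lam] iff m + e_k is a rearrangement of lam. *)
Definition Ecoef d (lam : nat * nat * nat) (x0 x1 x2 : nat) : nat :=
  let c y s := if (y < d)%N && perm_eq s (seq3 lam) then (y * (d - y))%N else 0%N in
  (c x0.+1 [:: x0.+1; x1; x2] + c x1.+1 [:: x0; x1.+1; x2] + c x2.+1 [:: x0; x1; x2.+1])%N.

Lemma inord1_lift : (inord 1 : 'I_3) = lift ord0 ord0.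
Proof. exact/val_inj/inordK. Qed.

Lemma inord2_lift : (inord 2 : 'I_3) = lift ord0 (lift ord0 ord0).
Proof. exact/val_inj/inordK. Qed.

Lemma E_orbsum (F : fieldType) n lam (m : Mono n.+1) :
  E F n.+1 (orbsum F n.+1 lam) m = (Ecoef n.+1 lam (m ord0) (m (inord 1)) (m (inord 2)))%:R.
Proof.
rewrite /E; under eq_bigr do rewrite mulr_sumr.
rewrite exchange_big /=; under eq_bigr => k _ do rewrite sum_mono_incr.
rewrite !big_ord_recl big_ord0 addr0 /Ecoef /= !natrD /orbsum inord1_lift inord2_lift.
rewrite addrA; congr (_ + _ + _); rewrite ltnS; case: ltnP => mk //=;
  by rewrite !mono_incrE //= ?addn0 ?addn1; case: ifP; rewrite ?mul1r ?mul0r.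
Qed.

Lemma Ecoef_swap01 d lam x0 x1 x2 : Ecoef d lam x1 x0 x2 = Ecoef d lam x0 x1 x2.
Proof.
have swap (y z t : nat) : perm_eql [:: y; z; t] [:: z; y; t] by apply: perm_catCA [:: y] [:: z] _.
rewrite /Ecoef /= (swap x1.+1) (swap x1) (swap x1 x0).
by rewrite [in LHS](addnC (if _ then _ else _)).
Qed.

Lemma Ecoef_swap12 d lam x0 x1 x2 : Ecoef d lam x0 x2 x1 = Ecoef d lam x0 x1 x2.
Proof.
have swap (y z t : nat) : perm_eql [:: y; z; t] [:: y; t; z].
  by apply/permPl; rewrite perm_cons (perm_catCA [:: z] [:: t]).
by rewrite /Ecoef /= (swap x0.+1) (swap x0 x2.+1) (swap x0 x2) addnAC.
Qed.

Lemma Ecoef_perm d lam x0 x1 x2 y0 y1 y2 : perm_eq [:: x0; x1; x2] [:: y0; y1; y2] ->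
  Ecoef d lam x0 x1 x2 = Ecoef d lam y0 y1 y2.
Proof.
case/perm_eq3 => [[->[->->]]|[[->[->->]]|[[->[->->]]|[[->[->->]]|[[->[->->]]|[->[->->]]]]]]].
- by [].
- exact: Ecoef_swap12.
- exact: Ecoef_swap01.
- by rewrite Ecoef_swap12 Ecoef_swap01.
- by rewrite Ecoef_swap01 Ecoef_swap12.
- by rewrite Ecoef_swap01 Ecoef_swap12 Ecoef_swap01.
Qed.

Lemma Ecoef_gt0_weight d lam x0 x1 x2 : (0 < Ecoef d lam x0 x1 x2)%N ->
  (x0 + x1 + x2).+1 = (lam.1.1 + lam.1.2 + lam.2)%N.
Proof.
rewrite /Ecoef /=; do 3 case: ifP => [/andP[_ /perm_sumn /=]|_]; lia.
Qed.

Lemma Ecoef_gt0_raise {d a b c x0 x1 x2} :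
  (b <= a)%N -> (c <= b)%N -> (x1 <= x0)%N -> (x2 <= x1)%N ->
  (0 < Ecoef d (a.+1, b, c) x0 x1 x2)%N -> (x0 = a /\ x1 = b /\ x2 = c) \/ (a < x0)%N.
Proof.
move=> ba cb x10 x21; rewrite /Ecoef /=.
do 3 case: ifP => [/andP[_ /perm_eq3 /=]|_]; lia.
Qed.

Lemma Ecoef_raise_gt0 d a b c : (a.+1 < d)%N -> (0 < Ecoef d (a.+1, b, c) a b c)%N.
Proof.
move=> lt_ad; rewrite /Ecoef /= lt_ad perm_refl /=.
by rewrite !addn_gt0 muln_gt0 subn_gt0 lt_ad.
Qed.

Lemma row_free_triangular (F : fieldType) m n (A : 'M[F]_(m, n)) (w : 'I_m -> nat) :
  (forall i, exists2 j, A i j != 0 & forall i', i' != i -> A i' j != 0 -> (w i' < w i)%N) ->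
  row_free A.
Proof.
move=> triA; apply: inj_row_free => v vA0; apply/rowP => i; rewrite mxE.
have [k] := ubnP (w i); elim: k i => // k IHk i /ltnSE wi_le.
have [j Aij Aj_lt] := triA i.
have := congr1 (fun B : 'M_(1, n) => B 0 j) vA0; rewrite !mxE (bigD1 i) //= big1 ?addr0.
  by move/eqP; rewrite mulf_eq0 (negbTE Aij) orbF => /eqP.
move=> i' ne_i'; have [->|Ai'j] := eqVneq (A i' j) 0; first by rewrite mulr0.
by rewrite (IHk i') ?mul0r // (leq_trans (Aj_lt _ ne_i' Ai'j)).
Qed.

Definition Cmat (F : fieldType) n j : 'M[F]_(size (P3 n j.-1), size (P3 n j)) :=
  \matrix_(p, q) E F n.+1 (orbsum F n.+1 (part n j q)) (mono_of n (part n j.-1 p)).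

Lemma Cmat_Ecoef (F : fieldType) n j p q :
  Cmat F n j p q = (Ecoef n.+1 (part n j q)
    (part n j.-1 p).1.1 (part n j.-1 p).1.2 (part n j.-1 p).2)%:R.
Proof. by rewrite mxE E_orbsum; have := exps_mono_of (mem_part p); case=> -> -> ->. Qed.

Lemma Cmat_isCmatrix (F : fieldType) n j : (0 < j)%N -> isCmatrix F n.+1 j (Cmat F n j).
Proof.
move=> j_gt0 q m; under eq_bigr do rewrite mxE.
apply: orbsum_expansion => [m1 m2 perm_m | m1].
  by rewrite !E_orbsum; congr (_%:R); apply: Ecoef_perm.
rewrite E_orbsum => Ecoef_neq0.
have /Ecoef_gt0_weight : (0 < Ecoef n.+1 (part n j q) (m1 ord0) (m1 (inord 1)) (m1 (inord 2)))%N.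
  by rewrite lt0n; apply: contraNneq Ecoef_neq0 => ->.
by have := mem_part q; rewrite mem_P3 => /and4P[_ _ _ /eqP] /=; lia.
Qed.

Lemma Cmat_unique (F : fieldType) n j C : isCmatrix F n.+1 j C -> C = Cmat F n j.
Proof.
move=> C_def; apply/matrixP => p q; rewrite mxE C_def (sum_orbsum_part (p := p)) //.
by rewrite (exps_mono_of (mem_part p)).
Qed.

Lemma Cmat_row_free (F : fieldType) n j : [pchar F] =i pred0 ->
  (0 < j)%N -> (j <= n)%N -> row_free (Cmat F n j).
Proof.
move=> /pcharf0P charF0 j_gt0 j_le_n.
apply: (@row_free_triangular _ _ _ _ (fun p => n - (part n j.-1 p).1.1)%N) => p.
have := mem_part p; case e: (part n j.-1 p) => [[a b] c].
rewrite mem_P3 /= => /and4P[a_le ba cb /eqP abc].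
have /P3_partP[q e_q] : (a.+1, b, c) \in P3 n j.
  by rewrite mem_P3 /=; apply/and4P; split; lia.
exists q => [|p' ne_p' Ap'q].
  by rewrite Cmat_Ecoef e_q e charF0 -lt0n Ecoef_raise_gt0 //; lia.
move: Ap'q; rewrite Cmat_Ecoef e_q charF0 -lt0n.
have := mem_part p'; case e': (part n j.-1 p') => [[a' b'] c'] /=.
rewrite mem_P3 /= => /and4P[a'_le b'a' c'b' _] /(Ecoef_gt0_raise ba cb b'a' c'b').
case=> [[a'a [b'b c'c]] | lt_aa']; last lia.
by move/eqP: ne_p'; case; apply: part_inj; rewrite e e' a'a b'b c'c.
Qed.

Theorem lemma3p2 (F : closedFieldType) (hF : [pchar F] =i pred0) (d j : nat)
  (hj0 : (0 < j)%N) (hjd : (j < d)%N) :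
  (exists C, @isCmatrix F d j C) /\
  (forall C, @isCmatrix F d j C ->
     \rank C = size (P3 d.-1 j.-1) /\ size (P3 d.-1 j.-1) = p3 d.-1 j.-1).
Proof.
case: d hjd => [//|n] hjd.
split; first by exists (Cmat F n j); apply: Cmat_isCmatrix.
by move=> C /Cmat_unique ->; split => //; apply/eqP/Cmat_row_free.
Qed.
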